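(* Let $\omega$ be a non-quasianalytic weight function and $\sigma$ a heir of $\omega$, with associated weight matrices $\{W^x\}_{x>0}$ and $\{S^x\}_{x>0}$ respectively. Then there is $C\ge1$ such that for all $x>0$ and all $k\in\mathbb{N}$, $S^x_k\le e^{1/x}W^{Cx}_k$.
   Context: A weight function is a continuous increasing $\omega:[0,\infty)\to[0,\infty)$ with $\omega(0)=0$, $\omega(t)\to\infty$, $\omega(2t)=O(\omega(t))$, $\omega(t)=O(t)$, $\log t=o(\omega(t))$, and $\varphi_\omega(t)=\omega(e^t)$ convex; it is non-quasianalytic if $\int_0^\infty\frac{\omega(t)}{1+t^2}dt<\infty$. Normalizing $\omega|_{[0,1]}=0$, $\varphi_\omega^*(t)=\sup_{s\ge0}(st-\varphi_\omega(s))$ and the weight matrix is $W^x_k=\exp(\frac1x\varphi_\omega^*(xk))$; likewise $S^x_k=\exp(\frac1x\varphi^*_\sigma(xk))$. A weight function $\sigma$ is a heir of $\omega$ if $\sigma(t)=o(t)$ as $t\to\infty$ and there is $C>0$ with $\int_1^\infty\frac{\omega(tu)}{u^2}du\le C\sigma(t)+C$ for all $t>0$. *)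

From Stdlib Require Import Reals Lra ClassicalEpsilon.
Open Scope R_scope.

Definition cont_on_nonneg (w : R -> R) : Prop :=
  forall t, 0 <= t -> forall eps, 0 < eps -> exists d, 0 < d /\
    forall u, 0 <= u -> Rabs (u - t) < d -> Rabs (w u - w t) < eps.

Definition phi_of (w : R -> R) : R -> R := fun t => w (exp t).

Definition convex_on_R (f : R -> R) : Prop :=
  forall a b l, 0 <= l <= 1 ->
    f (l * a + (1 - l) * b) <= l * f a + (1 - l) * f b.

(* A weight function omega : [0,oo) -> [0,oo) (values on t < 0 irrelevant). *)
Definition weight_function (w : R -> R) : Prop :=
  cont_on_nonneg w /\
  (forall t, 0 <= t -> 0 <= w t) /\
  (forall s t, 0 <= s -> s <= t -> w s <= w t) /\
  w 0 = 0 /\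
  (forall M, exists T, forall t, T <= t -> M <= w t) /\
  (exists L T, forall t, T <= t -> w (2 * t) <= L * w t) /\
  (exists L T, forall t, T <= t -> w t <= L * t) /\
  (forall eps, 0 < eps -> exists T, 0 < T /\
     forall t, T <= t -> Rabs (ln t) <= eps * w t) /\
  convex_on_R (phi_of w).

Definition normalized (w : R -> R) : Prop :=
  forall t, 0 <= t <= 1 -> w t = 0.

Definition improper_int (f : R -> R) (a l : R) : Prop :=
  (forall T, a <= T -> inhabited (Riemann_integrable f a T)) /\
  (forall eps, 0 < eps -> exists T0, forall T (pr : Riemann_integrable f a T),
      T0 <= T -> Rabs (RiemannInt pr - l) < eps).

Definition non_quasianalytic (w : R -> R) : Prop :=
  exists l, improper_int (fun t => w t / (1 + t ^ 2)) 0 l.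

Definition heir (w s : R -> R) : Prop :=
  (forall eps, 0 < eps -> exists T, forall t, T <= t -> s t <= eps * t) /\
  exists C, 0 < C /\ forall t, 0 < t ->
    exists l, improper_int (fun u => w (t * u) / u ^ 2) 1 l /\ l <= C * s t + C.

Definition young_set (phi : R -> R) (t : R) : R -> Prop :=
  fun y => exists s, 0 <= s /\ y = s * t - phi s.

Definition young_conj (phi : R -> R) (t : R) : R :=
  epsilon (inhabits 0) (fun v => is_lub (young_set phi t) v).

Definition weight_matrix (w : R -> R) (x : R) (k : nat) : R :=
  exp (young_conj (phi_of w) (x * INR k) / x).

(* The heir condition forces [omega <= D sigma + D] on [(0, oo)]: since omega is
   nondecreasing, [int_1^oo omega(tu)/u^2 du >= int_1^2 omega(t)/4 du = omega(t)/4].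
   Hence [phi_omega <= D phi_sigma + D], and taking Young conjugates,
   [phi_sigma^*(y) <= 1 + phi_omega^*(D y)/D]; with [y = x k], dividing by [x] and
   exponentiating gives the claim with [C = D]. *)
From Stdlib Require Import Reals Lra ClassicalEpsilon.
Open Scope R_scope.

Lemma RiemannInt_ge_const (f : R -> R) (a b c : R) (pr : Riemann_integrable f a b) :
  a <= b -> (forall u, a < u < b -> c <= f u) -> c * (b - a) <= RiemannInt pr.
Proof.
  intros Hab Hc.
  rewrite <- (RiemannInt_P15 (RiemannInt_P14 a b c)).
  apply RiemannInt_P19; [exact Hab | exact Hc].
Qed.

Lemma improper_int_ge_const (f : R -> R) (a b c l : R) :
  a <= b -> (forall u, a <= u -> 0 <= f u) -> (forall u, a <= u <= b -> c <= f u) ->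
  improper_int f a l -> c * (b - a) <= l.
Proof.
  intros Hab Hnn Hc [Hint Hlim].
  apply Rnot_lt_le; intros Hl.
  destruct (Hlim (c * (b - a) - l) ltac:(lra)) as [T0 HT0].
  set (T := Rmax T0 b).
  assert (HbT : b <= T) by apply Rmax_r.
  destruct (Hint T ltac:(lra)) as [pr].
  specialize (HT0 T pr (Rmax_l T0 b)).
  assert (Habt : a <= b <= T) by lra.
  pose (prab := RiemannInt_P22 pr Habt).
  pose (prbT := RiemannInt_P23 pr Habt).
  assert (Hsplit := RiemannInt_P26 prab prbT pr).
  assert (Hab_ge := RiemannInt_ge_const f a b c prab Hab (fun u Hu => Hc u ltac:(lra))).
  assert (HbT_ge := RiemannInt_ge_const f b T 0 prbT HbT (fun u Hu => Hnn u ltac:(lra))).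
  apply Rabs_def2 in HT0; lra.
Qed.

Lemma heir_dominates (w s : R -> R) :
  weight_function w -> weight_function s -> heir w s ->
  exists D, 1 <= D /\ forall t, 0 < t -> w t <= D * s t + D.
Proof.
  intros (_ & Hwnn & Hwmono & _) (_ & Hsnn & _) [_ [C [HC Hh]]].
  exists (Rmax 1 (4 * C)); split; [apply Rmax_l|].
  intros t Ht.
  destruct (Hh t Ht) as [l [Hint Hl]].
  assert (Hquarter : w t / 4 * (2 - 1) <= l).
  { apply (improper_int_ge_const (fun u => w (t * u) / u ^ 2) 1 2 _ _ ltac:(lra));
      [| |exact Hint].
    - intros u Hu. apply Rmult_le_pos; [apply Hwnn; nra | apply Rlt_le, Rinv_0_lt_compat; nra].
    - intros u Hu.
      assert (Hw : w t <= w (t * u)) by (apply Hwmono; nra).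
      assert (0 <= w t) by (apply Hwnn; lra).
      apply Rle_trans with (w (t * u) / 4); [lra|].
      apply Rmult_le_compat_l; [lra|].
      apply Rinv_le_contravar; nra. }
  assert (0 <= s t) by (apply Hsnn; lra).
  pose proof (Rmax_r 1 (4 * C)).
  nra.
Qed.

Lemma young_set_bounded (w : R -> R) (y : R) :
  weight_function w -> 0 <= y -> bound (young_set (phi_of w) y).
Proof.
  intros (_ & Hnn & _ & _ & _ & _ & _ & Hlog & _) Hy.
  destruct (Hlog (/ (y + 1)) ltac:(apply Rinv_0_lt_compat; lra)) as [T [HT HTl]].
  exists (y * Rabs (ln T)). intros v [r [Hr ->]]. unfold phi_of.
  assert (0 <= y * Rabs (ln T)) by (apply Rmult_le_pos; [lra | apply Rabs_pos]).
  destruct (Rle_dec T (exp r)) as [HTr|HTr].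
  - specialize (HTl _ HTr). rewrite ln_exp, Rabs_pos_eq in HTl by lra.
    assert (Hw : (y + 1) * r <= w (exp r)).
    { apply Rmult_le_reg_l with (/ (y + 1)); [apply Rinv_0_lt_compat; lra|].
      rewrite <- Rmult_assoc, Rinv_l, Rmult_1_l by lra. exact HTl. }
    nra.
  - assert (Hrln : r < ln T) by (rewrite <- (ln_exp r); apply ln_increasing; [apply exp_pos | lra]).
    assert (0 <= w (exp r)) by (apply Hnn; apply Rlt_le, exp_pos).
    pose proof (Rle_abs (ln T)).
    nra.
Qed.

Lemma young_conj_lub (phi : R -> R) (y : R) :
  bound (young_set phi y) -> is_lub (young_set phi y) (young_conj phi y).
Proof.
  intros Hb. unfold young_conj. apply epsilon_spec.
  destruct (completeness _ Hb) as [m Hm].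
  - exists (0 * y - phi 0), 0. split; [lra | reflexivity].
  - exists m. exact Hm.
Qed.

Lemma young_conj_le_of_le (phi psi : R -> R) (D y : R) :
  0 < D -> bound (young_set phi (D * y)) ->
  (forall r, 0 <= r -> phi r <= D * psi r + D) ->
  young_conj psi y <= 1 + young_conj phi (D * y) / D.
Proof.
  intros HD Hb Hle.
  destruct (young_conj_lub _ _ Hb) as [Hub _].
  set (L := young_conj phi (D * y)) in *.
  assert (HL : D * (L / D) = L) by (field; lra).
  assert (Hs : is_upper_bound (young_set psi y) (1 + L / D)).
  { intros v [r [Hr ->]].
    assert (Hv : r * (D * y) - phi r <= L) by (apply Hub; exists r; split; [lra | reflexivity]).
    specialize (Hle r Hr).
    apply Rmult_le_reg_l with D; [exact HD|].
    rewrite Rmult_plus_distr_l, HL. nra. }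
  destruct (young_conj_lub psi y (ex_intro _ _ Hs)) as [_ Hleast].
  exact (Hleast _ Hs).
Qed.

Lemma exp_le_exp_compat (a b : R) : a <= b -> exp a <= exp b.
Proof.
  intros [Hlt | ->]; [left; apply exp_increasing, Hlt | right; reflexivity].
Qed.

Theorem lemma3p15 (w s : R -> R) :
  weight_function w -> normalized w -> non_quasianalytic w ->
  weight_function s -> normalized s -> heir w s ->
  exists C, 1 <= C /\
    forall (x : R) (k : nat), 0 < x ->
      weight_matrix s x k <= exp (1 / x) * weight_matrix w (C * x) k.
Proof.
  intros Hw _ _ Hs _ Hheir.
  destruct (heir_dominates w s Hw Hs Hheir) as [D [HD Hdom]].
  exists D; split; [exact HD|].
  intros x k Hx.
  set (y := x * INR k).
  assert (Hy : 0 <= y) by (apply Rmult_le_pos; [lra | apply pos_INR]).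
  assert (Hconj : young_conj (phi_of s) y <= 1 + young_conj (phi_of w) (D * y) / D).
  { apply young_conj_le_of_le; [lra | apply young_set_bounded; [exact Hw | nra] |].
    intros r _; apply Hdom, exp_pos. }
  unfold weight_matrix; fold y.
  replace (D * x * INR k) with (D * y) by (unfold y; ring).
  rewrite <- exp_plus.
  apply exp_le_exp_compat.
  replace (1 / x + young_conj (phi_of w) (D * y) / (D * x))
    with ((1 + young_conj (phi_of w) (D * y) / D) / x) by (field; lra).
  apply Rmult_le_compat_r; [apply Rlt_le, Rinv_0_lt_compat|]; assumption.
Qed.
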